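(* Let $(L,\preceq)$ be a lattice and $\delta$ a local congruence on $L$, and let $[x]_\delta,[y]_\delta\in L/\delta$. Suppose there exists a single class $[c]_\delta\in L/\delta$ such that $[x]_\delta\preceq_\delta[c]_\delta\preceq_\delta[y]_\delta$ and $[y]_\delta\preceq_\delta[c]_\delta\preceq_\delta[x]_\delta$, satisfying $x_1\preceq c_1\preceq y_1$ and $y_2\preceq c_2\preceq x_2$ for some $x_1,x_2\in[x]_\delta$, $c_1,c_2\in[c]_\delta$ and $y_1,y_2\in[y]_\delta$. Then $[x]_\delta=[y]_\delta$.
   Context: For an equivalence relation $\delta$ on $L$, $[a]_\delta$ is the class of $a$ and $L/\delta$ the set of classes. A local congruence on a lattice $(L,\preceq)$ is an equivalence relation each of whose classes is a sublattice of $L$ and is convex (if $u,v$ are in the class and $u\preceq w\preceq v$, then $w$ is in the class). A $\delta$-sequence from $p_0$ to $p_n$ is a finite sequence $(p_0,p_1,\dots,p_n)$ of elements of $L$ with $n\ge1$ such that for each $i\in\{1,\dots,n\}$ either $(p_{i-1},p_i)\in\delta$ or $p_{i-1}\preceq p_i$. The relation $\preceq_\delta$ on $L/\delta$ is defined by $[x]_\delta\preceq_\delta[y]_\delta$ iff there exists a $\delta$-sequence from some $x'\in[x]_\delta$ to some $y'\in[y]_\delta$. *)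

From HB Require Import structures.
From mathcomp Require Import all_boot all_order.
Set Implicit Arguments. Unset Strict Implicit. Unset Printing Implicit Defensive.
Import Order.TTheory.
Local Open Scope order_scope.

Definition relL (T : Type) := T -> T -> Prop.

Definition cls (T : Type) (delta : relL T) (a : T) : T -> Prop :=
  fun b => delta a b.

Definition local_congruence (disp : Order.disp_t) (L : latticeType disp)
    (delta : relL L) : Prop :=
  [/\ (forall a, delta a a),
      (forall a b, delta a b -> delta b a),
      (forall a b c, delta a b -> delta b c -> delta a c),
      (forall a u v, delta a u -> delta a v -> delta a (u `&` v) /\ delta a (u `|` v)) &
      (forall a u v w, delta a u -> delta a v -> u <= w -> w <= v -> delta a w)].

Fixpoint dchain (disp : Order.disp_t) (L : latticeType disp) (delta : relL L)
    (p : L) (s : seq L) : Prop :=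
  match s with
  | [::] => True
  | q :: s' => (delta p q \/ p <= q) /\ dchain delta q s'
  end.

Definition delta_seq (disp : Order.disp_t) (L : latticeType disp) (delta : relL L)
    (a b : L) : Prop :=
  exists s : seq L, s <> [::] /\ dchain delta a s /\ last a s = b.

Definition cls_le (disp : Order.disp_t) (L : latticeType disp) (delta : relL L)
    (x y : L) : Prop :=
  exists x' y', cls delta x x' /\ cls delta y y' /\ delta_seq delta x' y'.

From HB Require Import structures.
From mathcomp Require Import all_boot all_order.
From Stdlib Require Import FunctionalExtensionality PropExtensionality.
Set Implicit Arguments. Unset Strict Implicit. Unset Printing Implicit Defensive.
Import Order.TTheory.
Local Open Scope order_scope.

(* If u1 <= v1 and v2 <= u2 with u1, u2 in one class and v1, v2 in another,
   then v1 `&` u2 lies between u1 `&` u2 and u2, and between v1 `&` v2 and v1;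
   since classes are meet-closed and convex it belongs to both classes, which
   therefore coincide.  Applying this to [x] and [c], then to [c] and [y],
   gives [x] = [c] = [y]. *)

Section LocalCongruence.

Variables (disp : Order.disp_t) (L : latticeType disp) (delta : relL L).
Hypothesis delta_lc : local_congruence delta.

Lemma lc_sym a b : delta a b -> delta b a.
Proof. by case: delta_lc => _ sym _ _ _; apply: sym. Qed.

Lemma lc_trans a b c : delta a b -> delta b c -> delta a c.
Proof. by case: delta_lc => _ _ trans _ _; apply: trans. Qed.

Lemma lc_meet a u v : delta a u -> delta a v -> delta a (u `&` v).
Proof. by case: delta_lc => _ _ _ latt _ au av; case: (latt a u v). Qed.

Lemma lc_convex a u v w : delta a u -> delta a v -> u <= w -> w <= v -> delta a w.
Proof. by case: delta_lc => _ _ _ _ convex; apply: convex. Qed.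

Lemma lc_related_of_crossed_le a b u1 u2 v1 v2 :
  delta a u1 -> delta a u2 -> delta b v1 -> delta b v2 ->
  u1 <= v1 -> v2 <= u2 -> delta a b.
Proof.
move=> au1 au2 bv1 bv2 le_u1v1 le_v2u2.
have a_m : delta a (v1 `&` u2).
  by apply: (lc_convex (lc_meet au1 au2) au2); rewrite ?leIr ?leI2 ?lexx.
have b_m : delta b (v1 `&` u2).
  by apply: (lc_convex (lc_meet bv1 bv2) bv1); rewrite ?leIl ?leI2 ?lexx.
exact: lc_trans a_m (lc_sym b_m).
Qed.

Lemma lc_cls_eq a b : delta a b -> cls delta a = cls delta b.
Proof.
move=> ab; apply: functional_extensionality => w.
apply: propositional_extensionality; split.
- exact: lc_trans (lc_sym ab).
- exact: lc_trans ab.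
Qed.

End LocalCongruence.

Theorem proposition4p5 (disp : Order.disp_t) (L : latticeType disp)
    (delta : relL L) (x y : L) :
  local_congruence delta ->
  (exists c : L,
      cls_le delta x c /\ cls_le delta c y /\
      cls_le delta y c /\ cls_le delta c x /\
      exists x1 x2 c1 c2 y1 y2 : L,
        (cls delta x x1 /\ cls delta x x2 /\ cls delta c c1 /\ cls delta c c2 /\
         cls delta y y1 /\ cls delta y y2) /\
        (x1 <= c1 /\ c1 <= y1 /\ y2 <= c2 /\ c2 <= x2)) ->
  cls delta x = cls delta y.
Proof.
move=> lc [c [_ [_ [_ [_ [x1 [x2 [c1 [c2 [y1 [y2
  [[xx1 [xx2 [cc1 [cc2 [yy1 yy2]]]]] [le_x1c1 [le_c1y1 [le_y2c2 le_c2x2]]]]]]]]]]]]]]].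
have xc := lc_related_of_crossed_le lc xx1 xx2 cc1 cc2 le_x1c1 le_c2x2.
have cy := lc_related_of_crossed_le lc cc1 cc2 yy1 yy2 le_c1y1 le_y2c2.
by rewrite (lc_cls_eq lc (lc_trans lc xc cy)).
Qed.
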